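(* Let $\Gamma=\langle V,(w_u)_{u\in V},\alpha,\beta\rangle$ be a celebrity game with $\beta>1$, $n=|V|$, $W=\sum_{u\in V}w_u$, $w_{\max}=\max_{u}w_u$, and suppose $\alpha\ge w_{\max}$. If there is more than one vertex $u\in V$ with $\alpha>W-w_u$, then the edgeless graph $I_n$ is the unique Nash equilibrium graph of $\Gamma$; otherwise a star graph $S_n$ on $V$ (a tree with one vertex adjacent to all others) is a Nash equilibrium graph of $\Gamma$.
   Context: A celebrity game $\Gamma=\langle V,(w_u)_{u\in V},\alpha,\beta\rangle$ consists of a set of players $V=\{1,\dots,n\}$, celebrity weights $w_u>0$, a link cost $\alpha>0$ and a critical distance $\beta$ with $1\le\beta\le n-1$. A strategy of player $u$ is a set $S_u\subseteq V\setminus\{u\}$; a strategy profile is $S=(S_1,\dots,S_n)$; its outcome graph $G[S]$ is the undirected graph on $V$ with edge set $\{\{u,v\}: u\in S_v\text{ or }v\in S_u\}$. With $d_G$ the graph distance (infinite between different connected components), the cost of player $u$ is $c_u(S)=\alpha|S_u|+\sum_{v:\,d_{G[S]}(u,v)>\beta}w_v$. $S$ is a Nash equilibrium if no player can strictly decrease its cost by changing only its own strategy; a graph $G$ is a Nash equilibrium graph of $\Gamma$ if $G=G[S]$ for some Nash equilibrium $S$. *)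

From HB Require Import structures.
From mathcomp Require Import all_boot all_order all_algebra.
Set Implicit Arguments. Unset Strict Implicit. Unset Printing Implicit Defensive.
Import Order.TTheory GRing.Theory Num.Theory.
Local Open Scope ring_scope.

(* Players are V = 'I_n.  A strategy profile assigns to each player u the set
   S u of players it buys links to. *)
Definition profile (n : nat) := 'I_n -> {set 'I_n}.

Definition valid_profile n (S : profile n) : Prop := forall u, u \notin S u.

Definition outcome n (S : profile n) : rel 'I_n :=
  fun u v => (u \in S v) || (v \in S u).

(* d_G(u,v) <= k : there is a walk of length at most k from u to v in G
   (distance is infinite between different components, so then this fails) *)
Definition dist_le n (G : rel 'I_n) (k : nat) (u v : 'I_n) : bool :=
  [exists m : 'I_k.+1, exists t : m.-tuple 'I_n,
     path G u t && (last u t == v)].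

Definition cost n (R : realFieldType) (w : 'I_n -> R) (alpha : R) (beta : nat)
  (S : profile n) (u : 'I_n) : R :=
  alpha * (#|S u|)%:R
  + \sum_(v : 'I_n | ~~ dist_le (outcome S) beta u v) w v.

Definition deviate n (S : profile n) (u : 'I_n) (T : {set 'I_n}) : profile n :=
  fun x => if x == u then T else S x.

Definition nash n (R : realFieldType) (w : 'I_n -> R) (alpha : R) (beta : nat)
  (S : profile n) : Prop :=
  valid_profile S /\
  forall (u : 'I_n) (T : {set 'I_n}), u \notin T ->
    cost w alpha beta S u <= cost w alpha beta (deviate S u T) u.

Definition nash_graph n (R : realFieldType) (w : 'I_n -> R) (alpha : R) (beta : nat)
  (G : rel 'I_n) : Prop :=
  exists S : profile n, nash w alpha beta S /\ forall u v, G u v = outcome S u v.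

Definition edgeless n : rel 'I_n := fun _ _ => false.

Definition star n (c : 'I_n) : rel 'I_n :=
  fun u v => ((u == c) && (v != c)) || ((v == c) && (u != c)).

From HB Require Import structures.
From mathcomp Require Import all_boot all_order all_algebra.
From mathcomp Require Import lra zify.
Set Implicit Arguments.
Unset Strict Implicit.
Unset Printing Implicit Defensive.
Import Order.TTheory GRing.Theory Num.Theory.
Local Open Scope ring_scope.

(* Deviating to the empty strategy costs a player at most [W - w_u], so in an
   equilibrium a player [u] with [alpha > W - w_u] buys no link, and, as soon as
   one such player exists, nobody buys two links (since [alpha >= w_max]).  A
   player buying one link must moreover be within distance [beta] of every such
   [u].  With two such players [u1 <> u2] a link would therefore put [u1] and
   [u2] in one component of a graph in which every vertex buys at most one link
   and [u1], [u2] buy none; following the bought links from any vertex of that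
   component leads to a single sink, a contradiction.  Conversely, the edgeless
   graph is stable because a link costs at least the weight it can bring in,
   and when at most one player [c] has [alpha > W - w_c], the star centred at
   [c] is stable: every distance is at most [2 <= beta], the centre pays
   nothing, and a leaf pays [alpha], which is at most the cost [W - w_u] of
   isolating itself. *)

Lemma ler_sum_subpred (R : numDomainType) (I : finType) (P Q : pred I)
    (F : I -> R) :
  (forall i, 0 <= F i) -> (forall i, P i -> Q i) ->
  \sum_(i | P i) F i <= \sum_(i | Q i) F i.
Proof.
move=> F_ge0 PQ; rewrite [X in X <= _]big_mkcond [X in _ <= X]big_mkcond.
apply: ler_sum => i _; case: (boolP (P i)) => [/PQ -> // | _].
by case: (Q i).
Qed.

Lemma card_le1_outside (T : finType) (A : {set T}) (x0 : T) :
  (#|A| <= 1)%N -> exists c, forall x, x != c -> x \notin A.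
Proof.
move=> /card_le1P A1; have [-> | [c cA]] := set_0Vmem A.
  by exists x0 => x _; rewrite in_set0.
by exists c => x; apply: contra => xA; rewrite (A1 c cA) in xA.
Qed.

Section Reachability.
Variables (n : nat) (G : rel 'I_n).

Lemma walk_dist_le k u s :
  path G u s -> (size s <= k)%N -> dist_le G k u (last u s).
Proof.
move=> Gs sk; apply/existsP; exists (Ordinal (sk : (size s < k.+1)%N)).
by apply/existsP; exists (in_tuple s); rewrite /= Gs eqxx.
Qed.

Lemma dist_le_refl k u : dist_le G k u u.
Proof. exact: (@walk_dist_le k u [::]). Qed.

Lemma dist_le_connect k u v : dist_le G k u v -> connect G u v.
Proof.
case/existsP=> m /existsP[t /andP[Gt /eqP <-]].
by apply/connectP; exists (val t).
Qed.

Lemma dist_le_closed (A : {pred 'I_n}) k u v :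
  closed G A -> dist_le G k u v -> (u \in A) = (v \in A).
Proof. by move=> clA /dist_le_connect; apply: closed_connect. Qed.

End Reachability.

Lemma outcome_sym n (S : profile n) : symmetric (outcome S).
Proof. by move=> u v; rewrite /outcome orbC. Qed.

Section AtMostOneLinkEach.
Variables (n : nat) (S : profile n).
Hypothesis S_le1 : forall x, (#|S x| <= 1)%N.

Let succ a := odflt a [pick y in S a].

Let succ_in a b : b \in S a -> succ a = b.
Proof.
move=> b_in; rewrite /succ; case: pickP => [y y_in | S0] /=; last first.
  by rewrite S0 in b_in.
have /card_le1P Sa1 := S_le1 a.
by move: (Sa1 y y_in b); rewrite b_in inE => /esym/eqP.
Qed.

Let succ_set0 a : S a = set0 -> succ a = a.
Proof.
by move=> S0; rewrite /succ; case: pickP => // y; rewrite S0 in_set0.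
Qed.

Let fconnect_succ_fixpoint u a :
  succ u = u -> fconnect succ (succ a) u = fconnect succ a u.
Proof.
move=> fix_u; apply/idP/idP; first exact/connect_trans/fconnect1.
by move=> /iter_findex e; rewrite -[u]fix_u -e -iterS iterSr fconnect_iter.
Qed.

Lemma connect_outcome_set0 u1 u2 :
  S u1 = set0 -> S u2 = set0 -> connect (outcome S) u1 u2 -> u1 = u2.
Proof.
move=> /succ_set0 fix1 /succ_set0 fix2 c12.
(* following bought links from any vertex reaches the sink [u1] or never *)
have cl : closed (outcome S) [pred a | fconnect succ a u1].
  move=> a b /orP[/succ_in <- | /succ_in <-];
    by rewrite !inE fconnect_succ_fixpoint.
move: (closed_connect cl c12); rewrite !inE connect0 => /esym/iter_findex <-.
exact: iter_fix.
Qed.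

End AtMostOneLinkEach.

Definition star_profile n (c : 'I_n) : profile n :=
  fun x => if x == c then set0 else [set c].

Lemma in_star_profile n (c a b : 'I_n) :
  (a \in star_profile c b) = (a == c) && (b != c).
Proof.
rewrite /star_profile.
by case: (eqVneq b c); rewrite ?in_set0 ?in_set1 ?andbF ?andbT.
Qed.

Lemma outcome_star_profile n (c : 'I_n) : outcome (star_profile c) =2 star c.
Proof. by move=> u v; rewrite /outcome !in_star_profile. Qed.

Lemma star_profile_dist_le n (c : 'I_n) k u v :
  (1 < k)%N -> dist_le (outcome (star_profile c)) k u v.
Proof.
move=> k_gt1; set G := outcome _.
have edge a b : a != b -> (a == c) || (b == c) -> G a b.
  rewrite /G outcome_star_profile /star.
  by case: (eqVneq a c) => [-> | _]; case: (eqVneq b c); rewrite ?eqxx.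
have [<- | uv] := eqVneq u v; first exact: dist_le_refl.
have [/orP uv_c | /norP[uc vc]] := boolP ((u == c) || (v == c)).
  apply: (@walk_dist_le _ _ k u [:: v]); last exact: ltnW.
  by rewrite /= edge //; case: uv_c => ->; rewrite ?orbT.
apply: (@walk_dist_le _ _ k u [:: c; v]) => //=.
by rewrite !edge ?eqxx ?orbT // eq_sym.
Qed.

Section CelebrityGame.
Variables (n : nat) (R : realFieldType) (w : 'I_n -> R) (alpha : R)
  (beta : nat).
Hypothesis w_gt0 : forall v, 0 < w v.

Local Notation cost := (cost w alpha beta).
Local Notation nash := (nash w alpha beta).
Local Notation W := (\sum_(v : 'I_n) w v).

Let w_ge0 v : 0 <= w v. Proof. exact: ltW. Qed.

Lemma sum_weights_but x : W - w x = \sum_(v | v != x) w v.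
Proof. by rewrite (bigD1 x) //= addrC addrK. Qed.

Lemma cost_ge_links (S : profile n) x : alpha * (#|S x|)%:R <= cost S x.
Proof. by rewrite /cost lerDl sumr_ge0. Qed.

Lemma cost_ge_far (S : profile n) x u :
  ~~ dist_le (outcome S) beta x u -> alpha * (#|S x|)%:R + w u <= cost S x.
Proof. by move=> far_u; rewrite /cost lerD2l (bigD1 u) //= lerDl sumr_ge0. Qed.

Lemma cost_le_sum_but (S : profile n) x : S x = set0 -> cost S x <= W - w x.
Proof.
move=> S0; rewrite /cost S0 cards0 mulr0 add0r sum_weights_but.
apply: ler_sum_subpred => // v; apply: contra => /eqP ->.
exact: dist_le_refl.
Qed.

Lemma cost_isolated (S : profile n) x :
  (forall y, ~~ outcome S x y) -> cost S x = W - w x.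
Proof.
move=> iso_x; have no_edge y : outcome S x y = false by exact: negbTE.
have S0 : S x = set0.
  apply/setP => y; rewrite in_set0; apply: contraFF (no_edge y) => y_in.
  by rewrite /outcome y_in orbT.
have cl : closed (outcome S) (pred1 x).
  move=> a b; rewrite !inE.
  case: eqP => [-> | _]; case: eqP => [-> | //];
    by rewrite ?no_edge // outcome_sym no_edge.
rewrite /cost S0 cards0 mulr0 add0r sum_weights_but.
apply: eq_bigl => v; congr negb.
apply/idP/eqP => [x_v | ->]; last exact: dist_le_refl.
by have := dist_le_closed cl x_v; rewrite !inE eqxx => /esym/eqP.
Qed.

Lemma nash_cost_le (S : profile n) x : nash S -> cost S x <= W - w x.
Proof.
case=> _ /(_ x set0 (negbT (in_set0 x))) le_dev; apply: le_trans le_dev _.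
by apply: cost_le_sum_but; rewrite /deviate eqxx.
Qed.

Hypothesis w_le_alpha : forall v, w v <= alpha.

Lemma nash_set0 : nash (fun _ => set0).
Proof.
split=> [u | u T uT]; first by rewrite in_set0.
apply: le_trans (cost_le_sum_but (erefl : (fun _ => set0) u = set0)) _.
set S := deviate _ u T; have Su : S u = T by rewrite /S /deviate eqxx.
have reach v : dist_le (outcome S) beta u v -> (v == u) || (v \in T).
  have cl : closed (outcome S) [pred a | (a == u) || (a \in T)].
    move=> a b /orP[]; rewrite /S /deviate; case: eqP => [-> | _];
      by rewrite ?in_set0 // !inE => ->; rewrite eqxx !orbT.
  by move/(dist_le_closed cl); rewrite !inE eqxx => <-.
rewrite /cost Su sum_weights_but (bigID (mem T)) /=; apply: lerD.
  apply: le_trans (ler_sum_subpred (Q := mem T) w_ge0 _) _ => [v /andP[] // |].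
  by rewrite mulr_natr -sumr_const; apply: ler_sum.
apply: ler_sum_subpred => // v /andP[vu vT]; apply: contra vT => /reach.
by rewrite (negbTE vu).
Qed.

Lemma nash_cheap_set0 (S : profile n) u :
  nash S -> W - w u < alpha -> S u = set0.
Proof.
move=> S_nash cheap_u; apply/eqP; rewrite -cards_eq0; apply: contraTT cheap_u.
rewrite -lt0n -leNgt => S_gt0.
have := nash_cost_le u S_nash; have := cost_ge_links S u.
have : 1 <= (#|S u|)%:R :> R by rewrite ler1n.
have := w_le_alpha u; have := w_gt0 u.
move: (#|S u|)%:R => k; nra.
Qed.

Lemma nash_cheap_card_le1 (S : profile n) u x :
  nash S -> W - w u < alpha -> (#|S x| <= 1)%N.
Proof.
move=> S_nash cheap_u; rewrite leqNgt; apply/negP => S_gt1.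
have := nash_cost_le x S_nash; have := cost_ge_links S x.
have : 2 <= (#|S x|)%:R :> R by rewrite (ler_nat R 2).
have := w_le_alpha u; have := w_gt0 u; have := w_gt0 x.
move: (#|S x|)%:R => k; nra.
Qed.

Lemma nash_buyer_near_cheap (S : profile n) u x :
  nash S -> W - w u < alpha -> S x != set0 -> dist_le (outcome S) beta x u.
Proof.
move=> S_nash cheap_u Sx; apply: contraT => far_u.
have := nash_cost_le x S_nash; have := cost_ge_far far_u.
have : 1 <= (#|S x|)%:R :> R by rewrite ler1n card_gt0.
have := w_le_alpha u; have := w_gt0 u; have := w_gt0 x.
move: (#|S x|)%:R => k; nra.
Qed.

Lemma nash_two_cheap_set0 (S : profile n) u1 u2 :
  nash S -> W - w u1 < alpha -> W - w u2 < alpha -> u1 != u2 ->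
  forall x, S x = set0.
Proof.
move=> S_nash cheap1 cheap2 u12 x; apply/eqP; apply: contraNT u12 => Sx.
have near u : W - w u < alpha -> connect (outcome S) x u.
  move=> cheap_u; apply: dist_le_connect.
  exact: nash_buyer_near_cheap S_nash cheap_u Sx.
have S_le1 y : (#|S y| <= 1)%N by exact: nash_cheap_card_le1 S_nash cheap1.
apply/eqP/(connect_outcome_set0 S_le1).
- exact: nash_cheap_set0 S_nash cheap1.
- exact: nash_cheap_set0 S_nash cheap2.
- apply: connect_trans (near _ cheap2).
  by rewrite (sym_connect_sym (@outcome_sym n S)) near.
Qed.

Lemma nash_star_profile c :
  (1 < beta)%N -> (forall x, x != c -> alpha <= W - w x) ->
  nash (star_profile c).
Proof.
move=> beta_gt1 leaves_stay.
have alpha_gt0 : 0 < alpha := lt_le_trans (w_gt0 c) (w_le_alpha c).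
split=> [u | u T uT]; first by rewrite in_star_profile andbN.
have -> : cost (star_profile c) u = alpha * (#|star_profile c u|)%:R.
  by rewrite /cost big_pred0 ?addr0 // => v; rewrite star_profile_dist_le.
set S := deviate _ u T; have Su : S u = T by rewrite /S /deviate eqxx.
have [-> | uc] := eqVneq u c.
  rewrite /star_profile eqxx cards0 mulr0; apply: le_trans (cost_ge_links S c).
  exact: mulr_ge0 (ltW alpha_gt0) (ler0n _ _).
rewrite /star_profile (negbTE uc) cards1 mulr1.
have [T0 | T_neq0] := eqVneq T set0.
  rewrite cost_isolated; first exact: leaves_stay.
  move=> y; rewrite /outcome /S /deviate eqxx T0 in_set0 orbF.
  by case: eqP => _; rewrite ?in_set0 ?in_star_profile ?(negbTE uc).
apply: le_trans (cost_ge_links S u).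
by rewrite Su ler_pMr // ler1n card_gt0.
Qed.

End CelebrityGame.

Theorem proposition5 (n : nat) (R : realFieldType) (w : 'I_n -> R) (alpha : R)
    (beta : nat) :
  (forall u, 0 < w u) -> 0 < alpha ->
  (1 <= beta)%N -> (beta <= n - 1)%N ->
  (1 < beta)%N ->
  (forall u, w u <= alpha) ->
  let W := \sum_(u : 'I_n) w u in
  if leq 2 #|[set u : 'I_n | W - w u < alpha]| then
    nash_graph w alpha beta (@edgeless n) /\
    (forall G : rel 'I_n, nash_graph w alpha beta G ->
       forall u v, G u v = edgeless u v)
  else
    exists c : 'I_n, nash_graph w alpha beta (star c).
Proof.
move=> w_gt0 _ _ beta_le beta_gt1 w_le_alpha W.
case: ifP => [two_cheap | /negbT].
  split.
    exists (fun _ => set0); split; first exact: nash_set0.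
    by move=> u v; rewrite /outcome !in_set0.
  move=> G [S [S_nash GS]] u v.
  have /card_gt1P[u1 [u2 [cheap1 cheap2 u12]]] := two_cheap.
  rewrite !inE in cheap1 cheap2.
  have S0 := nash_two_cheap_set0 w_gt0 w_le_alpha S_nash cheap1 cheap2 u12.
  by rewrite GS /outcome !S0 !in_set0.
rewrite -ltnNge ltnS => cheap_le1.
have n_gt0 : (0 < n)%N by lia.
have [c c_only] := card_le1_outside (Ordinal n_gt0) cheap_le1.
exists c, (star_profile c).
split; last by move=> u v; rewrite outcome_star_profile.
apply: nash_star_profile => // x /c_only.
by rewrite inE -leNgt.
Qed.
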